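(* Let $\Sigma$ be an oriented graph with $\det W(\Sigma)\neq 0$. Then there exists a unique regular rational orthogonal matrix $Q_0\in\mathcal{Q}(\Sigma)$ such that $Q_0^{\rm T}S(\Sigma)Q_0=S(\Sigma^{\rm T})$. Moreover, if $\Sigma$ is not isomorphic to $\Sigma^{\rm T}$, then $Q_0$ is not a permutation matrix.
   Context: An oriented graph on vertices $v_1,\dots,v_n$ is a simple graph with each edge directed. Its skew-adjacency matrix $S(\Sigma)=(s_{ij})$ has $s_{ij}=1$ if $(v_i,v_j)$ is an arc, $-1$ if $(v_j,v_i)$ is an arc, $0$ otherwise. The converse $\Sigma^{\rm T}$ reverses every arc, so $S(\Sigma^{\rm T})=-S(\Sigma)$. Two oriented graphs are isomorphic if their skew-adjacency matrices are conjugate by a permutation matrix; they are generalized cospectral if their skew-adjacency matrices $S$ have the same spectrum and the matrices $J-I-S$ have the same spectrum. With $e$ the all-one vector, $W(\Sigma)=[e,Se,\dots,S^{n-1}e]$, $S=S(\Sigma)$. A rational orthogonal matrix $Q$ is regular if $Qe=e$. $\mathcal{Q}(\Sigma)$ is the set of regular rational orthogonal $Q$ with $Q^{\rm T}S(\Sigma)Q=S(\Delta)$ for some oriented graph $\Delta$ generalized cospectral with $\Sigma$. *)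

From HB Require Import structures.
From mathcomp Require Import all_boot all_order all_algebra.
Set Implicit Arguments. Unset Strict Implicit. Unset Printing Implicit Defensive.
Import GRing.Theory.
Local Open Scope ring_scope.

Record ograph (n : nat) := OGraph {
  arc : rel 'I_n;
  arc_irr : irreflexive arc;
  arc_asym : forall i j, arc i j -> ~~ arc j i }.

Definition skew_adj n (G : ograph n) : 'M[rat]_n :=
  \matrix_(i, j) (if arc G i j then 1 else if arc G j i then -1 else 0).

Lemma conv_irr n (G : ograph n) : irreflexive (fun i j => arc G j i).
Proof. by move=> i; apply: arc_irr. Qed.

Lemma conv_asym n (G : ograph n) (i j : 'I_n) :
  arc G j i -> ~~ arc G i j.
Proof. exact: arc_asym. Qed.

Definition converse n (G : ograph n) : ograph n :=
  @OGraph n (fun i j => arc G j i) (@conv_irr n G) (@conv_asym n G).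

Definition onev n : 'cV[rat]_n := const_mx 1.
Definition Jmx n : 'M[rat]_n := const_mx 1.

Definition ograph_iso n (G D : ograph n) : Prop :=
  exists P : 'M[rat]_n, is_perm_mx P /\ P^T *m skew_adj G *m P = skew_adj D.

(* generalized cospectrality: S and J - I - S have the same spectra
   (spectrum with multiplicities = characteristic polynomial) *)
Definition gen_cospectral n (G D : ograph n) : Prop :=
  char_poly (skew_adj G) = char_poly (skew_adj D) /\
  char_poly (Jmx n - 1%:M - skew_adj G) = char_poly (Jmx n - 1%:M - skew_adj D).

Definition walk_mx n (G : ograph n) : 'M[rat]_n :=
  \matrix_(i, j) ((skew_adj G ^+ j *m onev n) i 0).

Definition reg_orth n (Q : 'M[rat]_n) : Prop :=
  Q^T *m Q = 1%:M /\ Q *m onev n = onev n.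

Definition Qset n (G : ograph n) (Q : 'M[rat]_n) : Prop :=
  reg_orth Q /\
  exists D : ograph n, gen_cospectral G D /\ Q^T *m skew_adj G *m Q = skew_adj D.

From Pilot Require Import Defs.
From HB Require Import structures.
From mathcomp Require Import all_boot all_order all_algebra.
Set Implicit Arguments. Unset Strict Implicit. Unset Printing Implicit Defensive.
Import GRing.Theory Num.Theory.
Local Open Scope ring_scope.

(* A regular orthogonal Q with Q^T S Q = -S anticommutes with S and fixes e,
   so it maps each column S^k e of W(S) to (-S)^k e, i.e. Q W(S) = W(-S), and
   W(-S) = W(Sigma^T).  Invertibility of W(S) thus forces
   Q = W(-S) W(S)^-1.  Conversely this matrix works: S being skew,
   e^T S^k e = 0 for odd k, whence W(-S)^T S^m W(-S) = (-1)^m W(S)^T S^m W(S),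
   and m = 0, 1 give orthogonality and Q^T S Q = -S.  If Q were a permutation
   matrix it would be an isomorphism from Sigma onto Sigma^T. *)

Section WalkMatrix.
Variables (R : comPzRingType) (n : nat).
Local Notation e := (const_mx 1 : 'cV[R]_n).

Definition walkmx (A : 'M[R]_n) : 'M[R]_n :=
  \matrix_(i, j) ((A ^+ j *m e) i 0).

Lemma walkmxE (A : 'M[R]_n) i j : walkmx A i j = (A ^+ j *m e) i 0.
Proof. exact: mxE. Qed.

Lemma trmxX (A : 'M[R]_n) k : (A ^+ k)^T = A^T ^+ k.
Proof.
elim: k => [|k IHk]; first by rewrite !expr0 tr_scalar_mx.
by rewrite exprS exprSr -!mulmxE trmx_mul IHk.
Qed.

Lemma exprNmx (A : 'M[R]_n) k : (- A) ^+ k = (-1) ^+ k *: A ^+ k.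
Proof.
elim: k => [|k IHk]; first by rewrite !expr0 scale1r.
by rewrite !exprS IHk -!mulmxE mulNmx -!scalemxAr -scalerA scaleN1r.
Qed.

Lemma mulmx_walkmx (M A : 'M[R]_n) i j :
  (M *m walkmx A) i j = (M *m A ^+ j *m e) i 0.
Proof. by rewrite -mulmxA !mxE; apply: eq_bigr => k _; rewrite mxE. Qed.

Lemma walkmx_gram (A X : 'M[R]_n) i j :
  ((walkmx A)^T *m X *m walkmx A) i j =
  (e^T *m (A^T ^+ i *m X *m A ^+ j) *m e) 0 0.
Proof.
rewrite mulmx_walkmx -!mulmxA.
have -> v : ((walkmx A)^T *m v) i 0 = ((A ^+ i *m e)^T *m v) 0 0.
  by rewrite !mxE; apply: eq_bigr => k _; rewrite !mxE.
by rewrite trmx_mul trmxX !mulmxA.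
Qed.

Lemma walkmx_intertwine (Q A B : 'M[R]_n) :
  Q *m A = B *m Q -> Q *m e = e -> Q *m walkmx A = walkmx B.
Proof.
move=> QA Qe; have QAX k : Q *m A ^+ k = B ^+ k *m Q.
  elim: k => [|k IHk]; first by rewrite !expr0 mulmx1 mul1mx.
  by rewrite !exprSr -!mulmxE mulmxA IHk -!mulmxA QA.
by apply/matrixP => i j; rewrite mulmx_walkmx QAX -mulmxA Qe walkmxE.
Qed.

Lemma mulmx_walkmx_const (M A B : 'M[R]_n) :
  M *m walkmx A = walkmx B -> M *m e = e.
Proof.
move=> MAB; apply/matrixP => i k; rewrite (ord1 k).
pose j0 : 'I_n := Ordinal (leq_ltn_trans (leq0n i) (ltn_ord i)).
move/matrixP/(_ i j0): MAB.
by rewrite mulmx_walkmx walkmxE /= expr0 mulmx1 mul1mx => ->.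
Qed.

End WalkMatrix.

Section SkewWalk.
Variables (R : numFieldType) (n : nat) (S : 'M[R]_n).
Hypothesis S_skew : S^T = - S.
Local Notation e := (const_mx 1 : 'cV[R]_n).

Lemma trmx_skewX k : (S ^+ k)^T = (-1) ^+ k *: S ^+ k.
Proof. by rewrite trmxX S_skew exprNmx. Qed.

Lemma skew_quadformX_odd (v : 'cV[R]_n) k : odd k -> v^T *m S ^+ k *m v = 0.
Proof.
move=> k_odd; apply/matrixP => i j; rewrite !ord1 [RHS]mxE.
set x := (v^T *m S ^+ k *m v) 0 0.
have : x = - x.
  rewrite {1}[x](_ : _ = (v^T *m S ^+ k *m v)^T 0 0); last by rewrite mxE.
  rewrite !trmx_mul trmxK trmx_skewX -signr_odd k_odd expr1 scaleN1r.
  by rewrite mulNmx mulmxN mulmxA mxE.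
by move/eqP; rewrite eq_sym eqNr => /eqP.
Qed.

Lemma walkmx_opp_gram m :
  (walkmx (- S))^T *m S ^+ m *m walkmx (- S) =
  (-1) ^+ m *: ((walkmx S)^T *m S ^+ m *m walkmx S).
Proof.
have quadformZ c (P : 'M_n) : (e^T *m (c *: P) *m e) 0 0 = c * (e^T *m P *m e) 0 0.
  by rewrite -scalemxAr -scalemxAl mxE.
apply/matrixP => i j; rewrite [RHS]mxE !walkmx_gram linearN /= S_skew opprK.
rewrite !exprNmx -scalemxAr -!scalemxAl !quadformZ !mulmxE -!exprD.
have [odd_imj | even_imj] := boolP (odd (i + m + j)).
  by rewrite skew_quadformX_odd // mxE !mulr0.
rewrite mulrA -exprD -signr_odd -[in RHS]signr_odd; congr (_ ^+ _ * _).
by move: even_imj; rewrite !oddD; case: (odd i); case: (odd m); case: (odd j).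
Qed.

Definition converse_mx : 'M[R]_n := walkmx (- S) *m invmx (walkmx S).

Hypothesis walkmx_unit : walkmx S \in unitmx.

Lemma converse_mx_walkmx : converse_mx *m walkmx S = walkmx (- S).
Proof. by rewrite mulmxKV. Qed.

Lemma converse_mx_const : converse_mx *m e = e.
Proof. exact: mulmx_walkmx_const converse_mx_walkmx. Qed.

Lemma converse_mx_unique (Q : 'M[R]_n) :
  Q^T *m Q = 1%:M -> Q *m e = e -> Q^T *m S *m Q = - S -> Q = converse_mx.
Proof.
move=> QtQ Qe QSQ; have QQt := mulmx1C QtQ.
have QS : Q *m S = - S *m Q.
  have SQ : S *m Q = - (Q *m S) by rewrite -mulmxN -QSQ !mulmxA QQt mul1mx.
  by rewrite mulNmx SQ opprK.
by rewrite /converse_mx -(walkmx_intertwine QS Qe) mulmxK.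
Qed.

Lemma converse_mx_conjX m :
  converse_mx^T *m S ^+ m *m converse_mx = (-1) ^+ m *: S ^+ m.
Proof.
set W := walkmx S; set W' := walkmx (- S).
have -> : converse_mx^T *m S ^+ m *m converse_mx =
          (invmx W)^T *m (W'^T *m S ^+ m *m W') *m invmx W.
  by rewrite trmx_mul !mulmxA.
rewrite walkmx_opp_gram -scalemxAr -scalemxAl; congr (_ *: _).
by rewrite !mulmxA -trmx_mul mulmxV // tr_scalar_mx mul1mx mulmxK.
Qed.

Lemma converse_mx_orthogonal : converse_mx^T *m converse_mx = 1%:M.
Proof. by have := converse_mx_conjX 0; rewrite expr0 scale1r !mulmx1. Qed.

Lemma converse_mx_skew : converse_mx^T *m S *m converse_mx = - S.
Proof. by have := converse_mx_conjX 1; rewrite !expr1 scaleN1r. Qed.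

End SkewWalk.

Lemma char_poly_trmx (R : comNzRingType) n (A : 'M[R]_n) :
  char_poly A^T = char_poly A.
Proof.
rewrite /char_poly -det_tr; congr (\det _).
by apply/matrixP => i j; rewrite !mxE eq_sym.
Qed.

Lemma skew_adj_converse n (G : ograph n) : skew_adj (converse G) = (skew_adj G)^T.
Proof. by apply/matrixP => i j; rewrite !mxE. Qed.

Lemma skew_adj_skew n (G : ograph n) : (skew_adj G)^T = - skew_adj G.
Proof.
apply/matrixP => i j; rewrite !mxE.
have [ij | nij] := boolP (Defs.arc G i j); first by rewrite (negbTE (arc_asym ij)).
by case: (Defs.arc G j i); rewrite ?opprK ?oppr0.
Qed.

Lemma walk_mxE n (G : ograph n) : walk_mx G = walkmx (skew_adj G).
Proof. by []. Qed.

Lemma gen_cospectral_converse n (G : ograph n) : gen_cospectral G (converse G).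
Proof.
rewrite /gen_cospectral skew_adj_converse char_poly_trmx; split=> //.
by rewrite -char_poly_trmx !linearB /= /Jmx trmx_const tr_scalar_mx.
Qed.

Theorem proposition2p5 (n : nat) (G : ograph n) :
  \det (walk_mx G) != 0 ->
  (exists! Q0 : 'M[rat]_n,
      Qset G Q0 /\ Q0^T *m skew_adj G *m Q0 = skew_adj (converse G)) /\
  (forall Q0 : 'M[rat]_n,
      Qset G Q0 -> Q0^T *m skew_adj G *m Q0 = skew_adj (converse G) ->
      ~ ograph_iso G (converse G) -> ~~ is_perm_mx Q0).
Proof.
rewrite walk_mxE => detW.
have W_unit : walkmx (skew_adj G) \in unitmx by rewrite unitmxE unitfE.
have S_skew := skew_adj_skew G.
have conv_skew : skew_adj (converse G) = - skew_adj G.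
  by rewrite skew_adj_converse S_skew.
have Q0_skew := converse_mx_skew S_skew W_unit.
have Q0_reg : reg_orth (converse_mx (skew_adj G)).
  by split; [exact: converse_mx_orthogonal | exact: converse_mx_const].
rewrite conv_skew; split.
  exists (converse_mx (skew_adj G)); split.
    split=> //; split=> //; exists (converse G); rewrite conv_skew Q0_skew.
    by split; first exact: gen_cospectral_converse.
  by move=> Q [[[QtQ Qe] _]]; move/(converse_mx_unique W_unit QtQ Qe).
move=> Q _ QSQ not_iso; apply/negP => Q_perm; apply: not_iso.
by exists Q; rewrite conv_skew.
Qed.
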